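(* Let $c\in\mathbb{N}$ and $I=\mathbb{N}\times[c]$. Then every $\mathrm{Sym}$-invariant lattice $L\subseteq\mathbb{Z}^{(I)}$ has a finite equivariant Graver basis, i.e. there is a finite set $\mathcal{G}\subseteq L$ such that $\mathrm{Sym}(\mathcal{G})=\{\sigma(\mathbf{u})\mid\sigma\in\mathrm{Sym},\mathbf{u}\in\mathcal{G}\}$ is the Graver basis of $L$.
   Context: $\mathbb{N}=\{1,2,\dots\}$, $[c]=\{1,\dots,c\}$. For a set $J$, $\mathbb{Z}^{(J)}$ is the free abelian group with basis $J$, i.e. finitely supported integer vectors $\mathbf{u}=(u_j)_{j\in J}$; a lattice is any subgroup of $\mathbb{Z}^{(J)}$. Define the partial order $\mathbf{u}\sqsubseteq\mathbf{v}$ iff $u_jv_j\ge0$ and $|u_j|\le|v_j|$ for all $j\in J$. The Graver basis of a lattice $L$ is the set of all $\sqsubseteq$-minimal elements of $L\setminus\{\mathbf{0}\}$. $\mathrm{Sym}$ denotes the group of permutations of $\mathbb{N}$ fixing all but finitely many elements. It acts on $\mathbb{Z}^{(\mathbb{N}\times[c])}$ by the linear extension of $\sigma(\mathbf{e}_{i,j})=\mathbf{e}_{\sigma(i),j}$, where $\mathbf{e}_{i,j}$ are the standard basis vectors. A lattice $L$ is $\mathrm{Sym}$-invariant if $\sigma(L)\subseteq L$ for all $\sigma\in\mathrm{Sym}$. *)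

From mathcomp Require Import all_boot all_order all_algebra.
From Stdlib Require Import List.
Set Implicit Arguments. Unset Strict Implicit. Unset Printing Implicit Defensive.
Import Order.TTheory GRing.Theory Num.Theory.
Local Open Scope ring_scope.

(* Index set N x [c]; N is modelled by nat (relabelling i |-> i+1),
   [c] by 'I_c. An integer vector is a function; it lies in Z^(I) iff
   it is finitely supported. *)
Definition vec (c : nat) := nat -> 'I_c -> int.

Definition fin_supp (c : nat) (u : vec c) : Prop :=
  exists N : nat, forall i : nat, (N <= i)%N -> forall j : 'I_c, u i j = 0.

Definition is_lattice (c : nat) (L : vec c -> Prop) : Prop :=
  (forall u, L u -> fin_supp u) /\
  L (fun _ _ => 0) /\
  (forall u v, L u -> L v -> L (fun i j => u i j + v i j)) /\
  (forall u, L u -> L (fun i j => - u i j)).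

Definition in_Sym (s : nat -> nat) : Prop :=
  bijective s /\ exists N : nat, forall i : nat, (N <= i)%N -> s i = i.

(* v = sigma(u), where sigma(e_{i,j}) = e_{sigma(i),j}, i.e. v_{sigma(i),j} = u_{i,j}
   (this determines v since sigma is surjective). *)
Definition act_rel (c : nat) (s : nat -> nat) (u v : vec c) : Prop :=
  forall (i : nat) (j : 'I_c), v (s i) j = u i j.

Definition Sym_invariant (c : nat) (L : vec c -> Prop) : Prop :=
  forall s, in_Sym s -> forall u v, L u -> act_rel s u v -> L v.

Definition sqle (c : nat) (u v : vec c) : Prop :=
  forall (i : nat) (j : 'I_c), 0 <= u i j * v i j /\ `|u i j| <= `|v i j|.

Definition nonzero (c : nat) (u : vec c) : Prop :=
  exists (i : nat) (j : 'I_c), u i j != 0.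

Definition in_graver (c : nat) (L : vec c -> Prop) (u : vec c) : Prop :=
  L u /\ nonzero u /\
  forall v, L v -> nonzero v -> sqle v u -> forall i j, v i j = u i j.

From Stdlib Require Import List Classical ClassicalEpsilon.
From mathcomp Require Import all_boot all_order all_algebra.
From mathcomp Require Import zify.
Set Implicit Arguments. Unset Strict Implicit. Unset Printing Implicit Defensive.
Import Order.TTheory GRing.Theory Num.Theory.

(* Write u <= v when some sigma in Sym maps u conformally below v.  Reading a
   finitely supported vector as the word of its columns in Z^c, a word
   embedding is realised by a finitary permutation, so Higman's lemma over a
   well-quasi-order on Z^c refining the conformal order shows that every
   infinite sequence has u_i <= u_j for some i < j.  If u_j is in the Graver
   basis, sigma(u_i) conformally below u_j forces sigma(u_i) = u_j by
   minimality.  Hence no infinite sequence of Graver elements avoids the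
   orbits of its predecessors, and finitely many orbits cover the basis. *)

Definition good (X : Type) (R : X -> X -> Prop) :=
  forall h : nat -> X, exists i j, (i < j)%N /\ R (h i) (h j).

Definition transitiveP (X : Type) (R : X -> X -> Prop) :=
  forall x y z, R x y -> R y z -> R x z.

Section GoodRelations.
Variable X : Type.
Implicit Types (R S : X -> X -> Prop) (h : nat -> X).

Lemma good_eventually_extends R h : good R ->
  exists N, forall i, (N <= i)%N -> exists j, (i < j)%N /\ R (h i) (h j).
Proof.
move=> gR; apply: NNPP => noN.
have dead N : exists i, (N <= i)%N /\ forall j, (i < j)%N -> ~ R (h i) (h j).
  apply: NNPP => H; apply: noN; exists N => i Ni; apply: NNPP => Hi; apply: H.
  by exists i; split => // j ij Rij; apply: Hi; exists j.
pose T N := epsilon (inhabits 0%N) (fun i => (N <= i)%N /\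
                                    forall j, (i < j)%N -> ~ R (h i) (h j)).
have TP N : (N <= T N)%N /\ forall j, (T N < j)%N -> ~ R (h (T N)) (h j).
  exact: epsilon_spec (dead N).
pose t k := iter k (fun x => T x.+1) (T 0).
have t_mono : {homo t : k l / (k < l)%N}.
  by apply: homo_ltn => [? ? ?|k]; [apply: ltn_trans | apply: (proj1 (TP _))].
have [[|i] [j [ij Rij]]] := gR (h \o t).
  exact: (proj2 (TP 0)) (t_mono _ _ ij) Rij.
exact: (proj2 (TP (t i).+1)) (t_mono _ _ ij) Rij.
Qed.

Lemma good_chain R h : good R ->
  exists phi : nat -> nat, {homo phi : k l / (k < l)%N} /\
                           forall k, R (h (phi k)) (h (phi k.+1)).
Proof.
move=> /(good_eventually_extends h) [N extN].
have extN' i : exists j, (N <= i)%N -> (i < j)%N /\ R (h i) (h j).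
  by case: (leqP N i) => [/extN [j]|]; [exists j | exists 0%N].
pose J i := epsilon (inhabits 0%N) (fun j => (N <= i)%N -> (i < j)%N /\ R (h i) (h j)).
have JP i : (N <= i)%N -> (i < J i)%N /\ R (h i) (h (J i)).
  exact: epsilon_spec (extN' i).
pose phi k := iter k J N.
have phiN k : (N <= phi k)%N.
  by elim: k => //= k IH; apply: leq_trans IH (ltnW (proj1 (JP _ IH))).
exists phi; split => [|k]; last exact: (proj2 (JP _ (phiN k))).
by apply: homo_ltn => [? ? ?|k]; [apply: ltn_trans | apply: (proj1 (JP _ (phiN k)))].
Qed.

Lemma chain_trans R h (phi : nat -> nat) : transitiveP R ->
  (forall k, R (h (phi k)) (h (phi k.+1))) ->
  forall k l, (k < l)%N -> R (h (phi k)) (h (phi l)).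
Proof.
move=> trR Rphi k; elim=> // l IH; rewrite ltnS leq_eqVlt => /orP [/eqP -> //|kl].
exact: trR (IH kl) (Rphi l).
Qed.

Lemma good_and R S : transitiveP R -> good R -> good S ->
  good (fun x y => R x y /\ S x y).
Proof.
move=> trR gR gS h; have [phi [phi_mono Rphi]] := good_chain h gR.
have [k [l [kl Skl]]] := gS (h \o phi).
by exists (phi k), (phi l); split; [exact: phi_mono | split; [exact: (chain_trans trR Rphi) |]].
Qed.

End GoodRelations.

Lemma good_comap (X Y : Type) (R : X -> X -> Prop) (f : Y -> X) :
  good R -> good (fun x y => R (f x) (f y)).
Proof. by move=> gR h; apply: gR (f \o h). Qed.

Lemma pointwise_trans (X I : Type) (R : X -> X -> Prop) : transitiveP R ->
  transitiveP (fun f g : I -> X => forall i, R (f i) (g i)).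
Proof. by move=> trR f g e Rfg Rge i; apply: trR (Rfg i) (Rge i). Qed.

Lemma good_pointwise (X : Type) (I : finType) (R : X -> X -> Prop) :
  transitiveP R -> good R -> good (fun f g : I -> X => forall i, R (f i) (g i)).
Proof.
move=> trR gR.
suff gs (s : seq I) : good (fun f g : I -> X => forall i, i \in s -> R (f i) (g i)).
  move=> h; have [i [j [ij Rij]]] := gs (enum I) h.
  by exists i, j; split=> // k; apply: Rij; rewrite mem_enum.
elim: s => [|i s IH] h; first by exists 0%N, 1%N.
have trs : transitiveP (fun f g : I -> X => forall k, k \in s -> R (f k) (g k)).
  by move=> f g e Rfg Rge k ks; apply: trR (Rfg k ks) (Rge k ks).
have [k [l [kl [Rs Ri]]]] := good_and trs IH (@good_comap _ _ R (fun f : I -> X => f i) gR) h.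
by exists k, l; split=> // m; rewrite inE => /orP [/eqP -> | /Rs].
Qed.

Lemma ex_min_measure (Y : Type) (mu : Y -> nat) (Q : Y -> Prop) :
  (exists y, Q y) -> exists y, Q y /\ forall y', Q y' -> (mu y <= mu y')%N.
Proof.
move=> [y Qy]; move: {2}(mu y) (leqnn (mu y)) => n; elim: n y Qy => [|n IH] y Qy le_y.
  by exists y; split=> // y' _; apply: leq_trans le_y _.
have [[y' [Qy' lt_y']]|min_y] := classic (exists y', Q y' /\ (mu y' < mu y)%N).
  by apply: (IH y') => //; rewrite -ltnS (leq_trans lt_y' le_y).
exists y; split=> // y' Qy'; rewrite leqNgt; apply/negP => lt_y'.
by apply: min_y; exists y'.
Qed.

Lemma nat_le_good : good (fun m n : nat => (m <= n)%N).
Proof.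
move=> h; have [i [_ min_i]] := @ex_min_measure nat h (fun _ => True) (ex_intro _ 0%N I).
by exists i, i.+1; split=> //; apply: min_i.
Qed.

Lemma bool_eq_good : good (@eq bool).
Proof.
move=> h; case E0: (h 0%N); case E1: (h 1%N); case E2: (h 2%N);
  by [ exists 0%N, 1%N; rewrite E0 E1 | exists 0%N, 2%N; rewrite E0 E2
      | exists 1%N, 2%N; rewrite E1 E2 ].
Qed.

Lemma good_finite_basis (X : Type) (S : X -> Prop) (R : X -> X -> Prop) :
  (forall h : nat -> X, (forall n, S (h n)) -> exists i j, (i < j)%N /\ R (h i) (h j)) ->
  exists G : seq X, (forall g, In g G -> S g) /\
                    forall u, S u -> exists g, In g G /\ R g u.
Proof.
move=> goodS; apply: NNPP => no_basis.
pose New G u := (forall g, In g G -> S g) -> S u /\ forall g, In g G -> ~ R g u.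
have [x0 _] : exists x : X, True.
  apply: NNPP => noX; apply: no_basis; exists [::]; split=> // u _.
  by case: noX; exists u.
have newP G : exists u, New G u.
  have [SG|] := classic (forall g, In g G -> S g); last by exists x0.
  apply: NNPP => no_new; apply: no_basis; exists G; split=> // u Su.
  apply: NNPP => no_g; apply: no_new; exists u => _; split=> // g Gg Rgu.
  by apply: no_g; exists g.
pose next G := epsilon (inhabits x0) (New G).
pose prefix n := iteri n (fun _ G => next G :: G) [::].
have prefixS n g : In g (prefix n) -> S g.
  elim: n g => //= n IH g [<-|]; last exact: IH.
  exact: (proj1 (epsilon_spec _ _ (newP _) IH)).
have prefix_mono m n : (m < n)%N -> In (next (prefix m)) (prefix n).
  elim: n => // n IH; rewrite ltnS leq_eqVlt => /orP [/eqP ->|mn]; first by left.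
  by right; apply: IH.
have [|i [j [ij Rij]]] := goodS (fun n => next (prefix n)).
  by move=> n; apply: (proj1 (epsilon_spec _ _ (newP _) (prefixS n))).
exact: (proj2 (epsilon_spec _ _ (newP _) (prefixS j))) _ (prefix_mono _ _ ij) Rij.
Qed.

Section Higman.
Variables (X : Type) (R : X -> X -> Prop).

Inductive emb : seq X -> seq X -> Prop :=
| emb_nil l : emb [::] l
| emb_cons a b w l : R a b -> emb w l -> emb (a :: w) (b :: l)
| emb_skip b w l : emb w l -> emb w (b :: l).

Definition bad (f : nat -> seq X) := forall i j, (i < j)%N -> ~ emb (f i) (f j).

Definition agree_below (n : nat) (f g : nat -> seq X) := forall i, (i < n)%N -> f i = g i.

Lemma minimal_bad_seq f : bad f -> exists m, bad m /\
  forall n g, bad g -> agree_below n g m -> (size (m n) <= size (g n))%N.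
Proof.
pose Min g n g' := bad g' /\ agree_below n g' g /\
  forall g'', bad g'' -> agree_below n g'' g -> (size (g' n) <= size (g'' n))%N.
have MinP g n : bad g -> Min g n (epsilon (inhabits g) (Min g n)).
  move=> bad_g; apply: epsilon_spec.
  have [g' [[bad_g' agr] min_g']] :=
    @ex_min_measure _ (fun g' => size (g' n)) (fun g' => bad g' /\ agree_below n g' g)
      (ex_intro _ g (conj bad_g (fun _ _ => erefl))).
  by exists g'; split=> //; split=> // g'' ? ?; apply: min_g'.
move=> bad_f; pose G n := iteri n (fun k g => epsilon (inhabits g) (Min g k)) f.
have bad_G n : bad (G n) by elim: n => //= n IH; case: (MinP _ n IH).
have G_stable i n : (i < n)%N -> G n i = G i.+1 i.
  elim: n => // n IH; rewrite ltnS leq_eqVlt => /orP [/eqP -> //|lt_in].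
  by have [_ [agr _]] := MinP _ n (bad_G n); rewrite /= agr // IH.
exists (fun i => G i.+1 i); split.
  move=> i j ij; rewrite -(G_stable i j.+1) //; last by apply: ltn_trans ij _.
  exact: bad_G.
move=> n g bad_g agr; have [_ [_ minG]] := MinP _ n (bad_G n); apply: minG => //.
by move=> i lt_in; rewrite agr // G_stable.
Qed.

Lemma bad_nonnil f n : bad f -> f n <> [::].
Proof. by move=> bad_f fn; apply: (bad_f n n.+1) => //; rewrite fn; apply: emb_nil. Qed.

Theorem higman : transitiveP R -> good R -> good emb.
Proof.
move=> trR gR f; apply: NNPP => good_f.
have [m [bad_m min_m]] : exists m, bad m /\
    forall n g, bad g -> agree_below n g m -> (size (m n) <= size (g n))%N.
  by apply: (minimal_bad_seq (f := f)) => i j ij E; apply: good_f; exists i, j.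
case: (m 0%N) (bad_nonnil (n := 0%N) bad_m) => [//|x0 _ _].
pose a n := head x0 (m n); pose t n := behead (m n).
have mE n : m n = a n :: t n by rewrite /a /t; case: (m n) (bad_nonnil (n := n) bad_m).
have [phi [phi_mono Rphi]] := good_chain a gR.
have phi0 k : (phi 0 <= phi k)%N by case: k => // k; apply/ltnW/phi_mono.
(* Replacing m from phi 0 on by the tails of m along the R-chain of heads
   gives a bad sequence that is shorter than m at phi 0. *)
pose g i := if (i < phi 0)%N then m i else t (phi (i - phi 0)).
suff bad_g : bad g.
  suff: (size (m (phi 0)) <= size (g (phi 0)))%N by rewrite /g ltnn subnn mE /= ltnn.
  by apply: min_m bad_g _ => i lt_i; rewrite /g lt_i.
move=> i j ij; rewrite /g; case: (ltnP j (phi 0)) => [lt_j|le_j].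
  by rewrite (ltn_trans ij lt_j); apply: bad_m.
case: (ltnP i (phi 0)) => [lt_i|le_i] E.
  apply: (bad_m i (phi (j - phi 0))); first exact: leq_trans lt_i (phi0 _).
  by rewrite (mE (phi _)); apply: emb_skip.
have kl : (i - phi 0 < j - phi 0)%N by lia.
apply: (bad_m _ _ (phi_mono _ _ kl)); rewrite !mE.
by apply: emb_cons => //; apply: (chain_trans trR Rphi).
Qed.

Lemma emb_nth x0 w l : emb w l -> exists f : nat -> nat,
  (forall i, (i < size w)%N ->
     [/\ (f i < size l)%N, (i <= f i)%N & R (nth x0 w i) (nth x0 l (f i))]) /\
  (forall i j, (i < size w)%N -> (j < size w)%N -> f i = f j -> i = j).
Proof.
elim=> {w l} [l|a b w l Rab _ [f [Ff f_inj]]|b w l _ [f [Ff f_inj]]].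
- by exists id.
- exists (fun i => if i is i'.+1 then (f i').+1 else 0%N); split.
    by case=> [|i] //= /Ff [? ? ?].
  by case=> [|i] [|j] //= ? ? [] /f_inj ->.
- exists (fun i => (f i).+1); split; first by move=> i /Ff [? ? ?]; split=> //; lia.
  by move=> i j wi wj [] /f_inj; apply.
Qed.

End Higman.

Definition transp (a b i : nat) : nat := if i == a then b else if i == b then a else i.

Lemma transpK a b : involutive (transp a b).
Proof.
move=> i; rewrite /transp.
case: (eqVneq i a) => [->|ia]; first by rewrite eqxx; case: (eqVneq b a) => [->|].
case: (eqVneq i b) => [->|ib]; first by rewrite eqxx.
by rewrite (negbTE ia) (negbTE ib).
Qed.

Lemma transp_id a b i : i != a -> i != b -> transp a b i = i.
Proof. by rewrite /transp => /negbTE -> /negbTE ->. Qed.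

Lemma in_Sym_inv s : in_Sym s -> exists s', [/\ in_Sym s', cancel s s' & cancel s' s].
Proof.
case=> [[s' ss' s's] [N fixN]]; exists s'; split=> //; split; first by exists s.
by exists N => i iN; rewrite -{1}(fixN i iN) ss'.
Qed.

(* The inductive step composes with the transposition of N and f N, which
   fixes every i < N because i < N <= f N. *)
Lemma in_Sym_extend N (f : nat -> nat) :
  (forall i, (i < N)%N -> (i <= f i)%N) ->
  (forall i j, (i < N)%N -> (j < N)%N -> f i = f j -> i = j) ->
  exists s, [/\ in_Sym s, forall i, (i < N)%N -> s i = f i &
    forall k, (N <= k)%N -> (forall i, (i < N)%N -> f i <> k) -> s k = k].
Proof.
elim: N => [|N IH] f_ge f_inj.
  by exists id; split=> //; split; [exists id | exists 0%N].
have [|i j iN jN|s [[s_bij [M fixM]] s_f s_id]] := IH.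
- by move=> i iN; apply/f_ge/ltnW.
- by apply: f_inj; apply: ltnW.
have fN_ge : (N <= f N)%N by apply: f_ge.
have fN_new i : (i < N)%N -> f i <> f N.
  by move=> iN /f_inj; move/(_ (ltnW iN) (ltnSn N)); lia.
exists (s \o transp N (f N)); split.
- split; first by apply: bij_comp s_bij _; exists (transp N (f N)); apply: transpK.
  exists (maxn M (maxn N.+1 (f N).+1)) => i Mi /=.
  by rewrite transp_id ?fixM //; apply/eqP; lia.
- move=> i; rewrite ltnS leq_eqVlt => /orP [/eqP -> | iN] /=.
    by rewrite /transp eqxx s_id.
  by rewrite transp_id ?s_f //; apply/eqP; lia.
- move=> k Nk k_new /=; rewrite transp_id.
  + by apply: s_id => [|i iN]; [apply: ltnW | apply: k_new; apply: ltnW].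
  + by apply/eqP; lia.
  + by apply/eqP => kfN; apply: (k_new N).
Qed.

Local Open Scope ring_scope.

Definition sign_abs_le (a b : int) : Prop := ((0 <= a) = (0 <= b)) /\ (`|a| <= `|b|)%N.

Lemma sign_abs_le_trans : transitiveP sign_abs_le.
Proof. by move=> a b d [sab ab] [sbd bd]; split; [rewrite sab | exact: leq_trans ab bd]. Qed.

Lemma sign_abs_le_good : good sign_abs_le.
Proof.
apply: good_and; first by move=> a b d -> ->.
  exact: good_comap bool_eq_good.
exact: good_comap nat_le_good.
Qed.

Lemma sign_abs_le_conformal (a b : int) : sign_abs_le a b -> 0 <= a * b /\ `|a| <= `|b|.
Proof.
case=> sab ab; split; last by rewrite -!abszE lez_nat.
have [a_ge0|a_lt0] := boolP (0 <= a); first by rewrite mulr_ge0 // -sab.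
have b_lt0 : b < 0 by rewrite ltNge -sab.
by rewrite ltW // nmulr_rgt0 // ltNge.
Qed.

Section Vectors.
Variable c : nat.
Implicit Types (u v w : vec c) (L : vec c -> Prop).

Definition col_le (x y : 'I_c -> int) : Prop := forall j, sign_abs_le (x j) (y j).

Lemma col_le_trans : transitiveP col_le.
Proof. exact: pointwise_trans sign_abs_le_trans. Qed.

Lemma col_le_good : good col_le.
Proof. exact: good_pointwise sign_abs_le_trans sign_abs_le_good. Qed.

Definition in_orbit u v : Prop := exists s, in_Sym s /\ act_rel s u v.

Definition cols u (N : nat) : seq ('I_c -> int) := [seq u i | i <- iota 0 N].

Lemma emb_cols_sqle u v N M : (forall i, (N <= i)%N -> forall j, u i j = 0) ->
  emb col_le (cols u N) (cols v M) ->
  exists s w, [/\ in_Sym s, act_rel s u w & sqle w v].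
Proof.
move=> u_supp /(emb_nth (fun _ => 0)) [f []]; rewrite !size_map !size_iota => f_le f_inj.
have f_ge i : (i < N)%N -> (i <= f i)%N by case/f_le.
have [s [s_Sym s_f _]] := in_Sym_extend f_ge f_inj.
have [s' [_ ss' s's]] := in_Sym_inv s_Sym.
exists s, (fun k j => u (s' k) j); split=> // [i j|k j]; first by rewrite ss'.
rewrite -[k]s's ss'; have [iN|Ni] := ltnP (s' k) N; last first.
  by rewrite u_supp // mul0r normr0.
have [fM _ /(_ j)] := f_le _ iN; rewrite s_f // !(nth_map 0%N) ?size_iota // !nth_iota //.
exact: sign_abs_le_conformal.
Qed.

Lemma act_nonzero s u v : act_rel s u v -> nonzero u -> nonzero v.
Proof. by move=> suv [i [j nz_u]]; exists (s i), j; rewrite suv. Qed.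

Lemma in_graver_act L s u v : Sym_invariant L -> in_Sym s ->
  in_graver L u -> act_rel s u v -> in_graver L v.
Proof.
move=> L_inv s_Sym [Lu [nz_u min_u]] suv.
have [s' [s'_Sym ss' s's]] := in_Sym_inv s_Sym.
split; [exact: L_inv suv | split; first exact: act_nonzero suv nz_u].
move=> w Lw nz_w w_le k j; pose w' : vec c := fun i j => w (s i) j.
have s'ww' : act_rel s' w w' by move=> i j'; rewrite /w' s's.
have := min_u w' (L_inv _ s'_Sym _ _ Lw s'ww') (act_nonzero s'ww' nz_w).
by rewrite -[k]s's => /(_ _ (s' k) j) eq_w; rewrite suv -eq_w // => i j'; rewrite /w' -suv.
Qed.

Lemma graver_orbit_good L : is_lattice L -> Sym_invariant L ->
  forall h : nat -> vec c, (forall n, in_graver L (h n)) ->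
  exists i j, (i < j)%N /\ in_orbit (h i) (h j).
Proof.
move=> [L_fin _] L_inv h h_graver.
pose B n := epsilon (inhabits 0%N) (fun N => forall i, (N <= i)%N -> forall j, h n i j = 0).
have h_supp n : forall i, (B n <= i)%N -> forall j, h n i j = 0.
  exact: (epsilon_spec _ _ (L_fin _ (proj1 (h_graver n)))).
have [i [j [ij E]]] := higman col_le_trans col_le_good (fun n => cols (h n) (B n)).
have [s [w [s_Sym hiw w_le]]] := emb_cols_sqle (h_supp i) E.
have [Lhi [nz_hi _]] := h_graver i; have [_ [_ min_hj]] := h_graver j.
have w_hj := min_hj w (L_inv _ s_Sym _ _ Lhi hiw) (act_nonzero hiw nz_hi) w_le.
by exists i, j; split=> //; exists s; split=> // k l; rewrite -w_hj.
Qed.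

End Vectors.

Theorem theorem4p1 (c : nat) (hc : (0 < c)%N) (L : vec c -> Prop) :
  is_lattice L -> Sym_invariant L ->
  exists G : list (vec c),
    (forall g, In g G -> L g) /\
    (forall u : vec c,
       in_graver L u <->
       exists s, in_Sym s /\ exists g, In g G /\ act_rel s g u).
Proof.
move=> L_lat L_inv.
have [G [G_graver G_basis]] := good_finite_basis (graver_orbit_good L_lat L_inv).
exists G; split=> [g /G_graver [] //|u]; split.
  by move=> /G_basis [g [Gg [s [s_Sym gu]]]]; exists s; split=> //; exists g.
by move=> [s [s_Sym [g [Gg gu]]]]; apply: in_graver_act L_inv s_Sym (G_graver g Gg) gu.
Qed.
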